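(* Consider a $k$-party quantum communication protocol $\mathcal{P}=(U_1^{p_1}(x_{p_1}),\dots,U_r^{p_r}(x_{p_r}))$. The final state of $\mathcal{P}$ on input $x_1\in\mathcal{X}_1,\dots,x_k\in\mathcal{X}_k$ can be written as \[\sum_{i\in S}a_i^1(x_1)\,a_i^2(x_2)\cdots a_i^k(x_k)\,\ket{A_i^1(x_1)}\ket{A_i^2(x_2)}\cdots\ket{A_i^k(x_k)}\ket{f(i)},\] where $S=\{0,1\}^{C(\mathcal{P})}$, each $a_i^p(x_p)$ is a complex number depending only on $i$ and $x_p$, each $\ket{A_i^p(x_p)}$ is a unit vector in $H_p$ depending only on $i$ and $x_p$, and $f:S\to\overline{H}$ is a function (independent of the inputs) mapping each $i$ to a state in $\overline{H}$.
   Context: $k$-party quantum communication model: players $P_1,\dots,P_k$, Hilbert space (of qubits) $H=H_1\otimes\cdots\otimes H_k\otimes\overline{H}$ with $H_i$ private to $P_i$ and $\overline{H}$ the shared channel; $P_i$ receives $x_i\in\mathcal{X}_i$. A protocol is a sequence of unitaries $(U_1^{p_1}(x_{p_1}),\dots,U_r^{p_r}(x_{p_r}))$, $U_j^{p_j}(x_{p_j})$ depending only on $x_{p_j}$ and acting only on $H_{p_j}\otimes\overline{H_j}$, where $\overline{H_j}$ is spanned by some qubits of $\overline{H}$; the sequences $p_1,\dots,p_r$ and $\overline{H_1},\dots,\overline{H_r}$ are fixed independently of the inputs. The initial state is $\ket{0}$ and the final state is $U_r^{p_r}(x_{p_r})\cdots U_1^{p_1}(x_{p_1})\ket{0}$.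 Communication complexity $C(\mathcal{P})=\sum_{j=1}^r\log(\dim\overline{H_j})$. *)

From HB Require Import structures.
From mathcomp Require Import all_boot all_order all_algebra.
Set Implicit Arguments. Unset Strict Implicit. Unset Printing Implicit Defensive.
Import Order.TTheory GRing.Theory Num.Theory.
Local Open Scope ring_scope.

(* Scalars: an arbitrary numeric algebraically closed field C (e.g. complex
   numbers); conjugation is x^*.
   Player p : 'I_k owns n p qubits: H_p has computational basis
   [qubits n p] = {ffun 'I_(n p) -> bool}.
   The shared channel has m qubits: basis [chan m] = {ffun 'I_m -> bool}.
   A vector of H = H_1 (x) ... (x) H_k (x) Hbar is a function
   (forall p, qubits (n p)) -> chan m -> C (coordinates in the product basis). *)

Definition qubits (d : nat) := {ffun 'I_d -> bool}.
Definition chan (m : nat) := {ffun 'I_m -> bool}.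

Definition gstate (C : Type) (k : nat) (n : 'I_k -> nat) (m : nat) :=
  (forall p : 'I_k, qubits (n p)) -> chan m -> C.

(* The subspace Hbar_j spanned by the channel qubits in Q : {set 'I_m};
   its basis is indexed by assignments of bits to the qubits of Q. *)
Definition locchan (m : nat) (Q : {set 'I_m}) := {ffun {q : 'I_m | q \in Q} -> bool}.

Definition restr (m : nat) (Q : {set 'I_m}) (c : chan m) : locchan Q :=
  [ffun q => c (val q)].

(* A unitary on a finite-dimensional space with basis T, given by its matrix
   entries U w y = <w| U |y>: U^* U = I. *)
Definition unitary (C : numClosedFieldType) (T : finType) (U : T -> T -> C) :=
  forall y z : T, \sum_(w : T) (U w y)^* * U w z = (y == z)%:R.

(* Apply a unitary V acting on H_p (x) Hbar_Q (identity on the other factors). *)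
Definition apply_local (C : numClosedFieldType) (k : nat) (n : 'I_k -> nat)
  (m : nat) (p : 'I_k) (Q : {set 'I_m})
  (V : qubits (n p) * locchan Q -> qubits (n p) * locchan Q -> C)
  (psi : gstate C n m) : gstate C n m :=
  fun b c =>
    \sum_(b' : qubits (n p))
      \sum_(c' : chan m | [forall q : 'I_m, (q \notin Q) ==> (c' q == c q)])
        V (b p, restr Q c) (b', restr Q c') * psi (dfwith b b') c'.

(* A protocol: r steps; step j is performed by player pl j on the channel
   qubits Q j, with unitary U j (x_{pl j}) depending only on that player's input. *)
Record protocol (C : numClosedFieldType) (k : nat) (n : 'I_k -> nat) (m : nat)
    (X : 'I_k -> Type) := Protocol {
  nsteps : nat;
  pl : 'I_nsteps -> 'I_k;
  Qs : 'I_nsteps -> {set 'I_m};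
  U : forall j : 'I_nsteps, X (pl j) ->
        qubits (n (pl j)) * locchan (Qs j) -> qubits (n (pl j)) * locchan (Qs j) -> C;
  U_unitary : forall (j : 'I_nsteps) (x : X (pl j)), unitary (U x)
}.

Definition init_state (C : numClosedFieldType) (k : nat) (n : 'I_k -> nat) (m : nat)
  : gstate C n m :=
  fun b c => ([forall p, b p == [ffun => false]] && (c == [ffun => false]))%:R.

Definition final_state (C : numClosedFieldType) (k : nat) (n : 'I_k -> nat) (m : nat)
  (X : 'I_k -> Type) (P : protocol C n m X) (x : forall p, X p) : gstate C n m :=
  foldl (fun psi j => apply_local (U (x (pl j))) psi) (@init_state C k n m)
        (enum 'I_(nsteps P)).

(* Communication complexity: sum_j log2 dim Hbar_j = sum_j #|Q_j|. *)
Definition comm_complexity (C : numClosedFieldType) (k : nat) (n : 'I_k -> nat)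
  (m : nat) (X : 'I_k -> Type) (P : protocol C n m X) : nat :=
  (\sum_(j < nsteps P) #|Qs j|)%N.

Definition unit_vec (C : numClosedFieldType) (T : finType) (v : T -> C) :=
  \sum_(t : T) `|v t| ^+ 2 = 1.

From mathcomp Require Import all_boot all_order all_algebra.
From mathcomp Require Import ring.
Import GRing.Theory Num.Theory.
Local Open Scope ring_scope.
Set Implicit Arguments. Unset Strict Implicit.

(* By induction on the steps, the state is a sum over an index set I of product vectors
   (x)_p |A_i^p(x_p)> (x) |g i>, with g i a computational basis state of the channel.
   A step of player p on the channel qubits Q changes only the factor of p, which absorbs
   the matrix entries of the unitary, and overwrites g i on Q: expanding the new content d
   of Q splits each term into 2^|Q| terms indexed by (i, d).  So the final state is such a
   sum over 2^C(P) indices; normalizing each A_i^p(x_p) and moving its norm into the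
   scalar a_i^p(x_p) gives the theorem. *)

Lemma sum_mul_delta (R : pzSemiRingType) (T : finType) (P : pred T) (F : T -> R) t0 :
  \sum_(t | P t) F t * (t == t0)%:R = (P t0)%:R * F t0.
Proof.
rewrite big_mkcond (bigD1 t0) //= eqxx mulr1 big1 ?addr0.
  by case: (P t0); rewrite ?mul1r ?mul0r.
by move=> t /negbTE ->; rewrite mulr0; case: (P t).
Qed.

Lemma prod_dfwith (R : comPzSemiRingType) (I : finType) (T : I -> Type)
    (F : forall i, T i -> R) (f : forall i, T i) (i0 : I) (y : T i0) :
  \prod_i F i (dfwith f y i) = F i0 y * \prod_(i | i != i0) F i (f i).
Proof.
rewrite (bigD1 i0) //= dfwith_in; congr (_ * _).
by apply: eq_bigr => i ne_i; rewrite dfwith_out // eq_sym.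
Qed.

Lemma prod_nat_bool (R : comPzSemiRingType) (I : finType) (B : pred I) :
  \prod_i ((B i)%:R : R) = [forall i, B i]%:R.
Proof.
case: (boolP [forall i, B i]) => [/forallP B_all|/forallPn[i /negbTE Bi]].
  by rewrite big1 // => i _; rewrite B_all.
by rewrite (bigD1 i) //= Bi mul0r.
Qed.

Section UnitVectors.
Variables (C : numClosedFieldType) (T : finType).

Lemma unit_vec_delta (t0 : T) : unit_vec (fun t => (t == t0)%:R : C).
Proof.
rewrite /unit_vec (bigD1 t0) //= eqxx normr1 expr1n big1 ?addr0 // => t /negbTE ->.
by rewrite normr0 expr0n.
Qed.

Definition vnorm (v : T -> C) := sqrtC (\sum_t `|v t| ^+ 2).

Lemma vnorm_ge0 v : 0 <= vnorm v.
Proof. by rewrite sqrtC_ge0 sumr_ge0 // => t _; rewrite exprn_ge0. Qed.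

Lemma vnorm_eq0 v : vnorm v = 0 -> forall t, v t = 0.
Proof.
move=> /eqP; rewrite sqrtC_eq0 => /eqP /psumr_eq0P sum0 t.
by apply/eqP; rewrite -normr_eq0 -(sqrf_eq0 _) sum0 // => s _; rewrite exprn_ge0.
Qed.

(* The zero vector is sent to the basis vector [t0], so that the result is always a unit vector. *)
Definition normalize (t0 : T) (v : T -> C) : T -> C :=
  if vnorm v == 0 then fun t => (t == t0)%:R else fun t => v t / vnorm v.

Lemma unit_vec_normalize t0 v : unit_vec (normalize t0 v).
Proof.
rewrite /normalize; case: eqP => [_|/eqP nz]; first exact: unit_vec_delta.
have sum_nz : \sum_t `|v t| ^+ 2 != 0 by rewrite -sqrtC_eq0.
rewrite /unit_vec.
under eq_bigr => t _ do rewrite normf_div (ger0_norm (vnorm_ge0 v)) expr_div_n.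
by rewrite -mulr_suml /vnorm sqrtCK mulfV.
Qed.

Lemma vnorm_normalize t0 v t : vnorm v * normalize t0 v t = v t.
Proof.
rewrite /normalize; case: eqP => [v0|/eqP nz]; last by rewrite mulrC divfK.
by rewrite v0 mul0r vnorm_eq0.
Qed.

End UnitVectors.

Section ChannelMerge.
Variables (m : nat) (Q : {set 'I_m}).

Definition agree_off (c' c : chan m) := [forall q, (q \notin Q) ==> (c' q == c q)].

Definition chan_merge (c : chan m) (d : locchan Q) : chan m :=
  [ffun q => if insub q is Some s then d s else c q].

Lemma eq_chan_merge (c' : chan m) (d : locchan Q) (c : chan m) :
  (c == chan_merge c' d) = agree_off c' c && (d == restr Q c).
Proof.
apply/eqP/andP => [->|[/forallP agree /eqP ->]].
  split; first by apply/forallP => q; apply/implyP => Qq; rewrite ffunE insubN.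
  by apply/eqP/ffunP => s; rewrite !ffunE valK.
apply/ffunP => q; rewrite ffunE; case: insubP => [s _ <-|Qq]; first by rewrite ffunE.
by apply/esym/eqP; apply: (implyP (agree q)); rewrite Qq.
Qed.

End ChannelMerge.

Section ProductDecomposition.
Variables (C : numClosedFieldType) (k : nat) (n : 'I_k -> nat) (m : nat).

Lemma eq_apply_local p0 (Q : {set 'I_m})
    (V : qubits (n p0) * locchan Q -> qubits (n p0) * locchan Q -> C)
    (psi phi : gstate C n m) :
  psi =2 phi -> apply_local V psi =2 apply_local V phi.
Proof.
move=> psi_phi b c; apply: eq_bigr => b' _.
by apply: eq_bigr => c' _; rewrite psi_phi.
Qed.

Lemma apply_local_sum (I : finType) p0 (Q : {set 'I_m})
    (V : qubits (n p0) * locchan Q -> qubits (n p0) * locchan Q -> C)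
    (F : I -> gstate C n m) b c :
  apply_local V (fun b c => \sum_i F i b c) b c = \sum_i apply_local V (F i) b c.
Proof.
rewrite /apply_local.
under eq_bigr => b' _ do under eq_bigr => c' _ do rewrite mulr_sumr.
under eq_bigr => b' _ do rewrite exchange_big.
exact: exchange_big.
Qed.

Lemma apply_local_term p0 (Q : {set 'I_m})
    (V : qubits (n p0) * locchan Q -> qubits (n p0) * locchan Q -> C)
    (B : forall p, qubits (n p) -> C) (g : chan m) b c :
  apply_local V (fun b c => (\prod_p B p (b p)) * (c == g)%:R) b c =
  (agree_off Q g c)%:R * (\prod_(p | p != p0) B p (b p)) *
    \sum_b' V (b p0, restr Q c) (b', restr Q g) * B p0 b'.
Proof.
rewrite /apply_local mulr_sumr; apply: eq_bigr => b' _.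
under [LHS]eq_bigr => c' _ do rewrite prod_dfwith mulrA.
by rewrite sum_mul_delta; ring.
Qed.

Variable X : 'I_k -> Type.

Definition prod_decomposition (I : finType) (S : (forall p, X p) -> gstate C n m) :=
  exists (A : forall p, I -> X p -> qubits (n p) -> C) (g : I -> chan m),
  forall x b c, S x b c = \sum_i (\prod_p A p i (x p) (b p)) * (c == g i)%:R.

Lemma prod_decomposition_init :
  prod_decomposition unit (fun _ : forall p, X p => @init_state C k n m).
Proof.
exists (fun p _ _ w => (w == [ffun => false])%:R), (fun _ => [ffun => false]) => x b c.
rewrite (big_pred1 tt) => [|[]] //; rewrite prod_nat_bool /init_state.
by case: [forall p, _]; case: (c == _); rewrite ?mul1r ?mul0r ?mulr0 ?mulr1.
Qed.

Lemma prod_decomposition_card (I J : finType) S :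
  #|I| = #|J| -> prod_decomposition I S -> prod_decomposition J S.
Proof.
move=> cardIJ [A [g E]].
pose h (j : J) : I := enum_val (cast_ord (esym cardIJ) (enum_rank j)).
have h_bij : bijective h.
  by exists (fun i => enum_val (cast_ord cardIJ (enum_rank i))) => y;
    rewrite /h enum_valK ?cast_ordK ?cast_ordKV enum_rankK.
exists (fun p j => A p (h j)), (fun j => g (h j)) => x b c.
by rewrite E (reindex h) //; exact: onW_bij.
Qed.

Lemma prod_decomposition_step (I : finType) S p0 (Q : {set 'I_m})
    (V : X p0 -> qubits (n p0) * locchan Q -> qubits (n p0) * locchan Q -> C) :
  prod_decomposition I S ->
  prod_decomposition (I * locchan Q)%type (fun x => apply_local (V (x p0)) (S x)).
Proof.
move=> [A [g E]].
pose A0 (t : I * locchan Q) xp w :=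
  \sum_b' V xp (w, t.2) (b', restr Q (g t.1)) * A p0 t.1 xp b'.
pose T p := (I * locchan Q)%type -> X p -> qubits (n p) -> C.
exists (fun p => @dfwith _ T (fun p t => A p t.1) p0 A0 p).
exists (fun t => chan_merge (g t.1) t.2) => x b c.
have sum_pair (F : I * locchan Q -> C) : \sum_t F t = \sum_i \sum_d F (i, d).
  by rewrite pair_bigA; apply: eq_bigr => -[].
rewrite (eq_apply_local _ (E x)) apply_local_sum sum_pair; apply: eq_bigr => i _.
rewrite (apply_local_term _ (fun p => A p i (x p))).
under [RHS]eq_bigr => d _.
  rewrite (prod_dfwith (fun p (a : T p) => a (i, d) (x p) (b p))).
  rewrite eq_chan_merge -mulnb natrM mulrA.
  over.
by rewrite /= sum_mul_delta mul1r /A0 /=; ring.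
Qed.

Variable P : protocol C n m X.

Lemma prod_decomposition_foldl (s : seq 'I_(nsteps P)) (I J : finType) S :
  #|J| = (#|I| * 2 ^ (\sum_(j <- s) #|Qs j|))%N ->
  prod_decomposition I S ->
  prod_decomposition J
    (fun x => foldl (fun psi j => apply_local (U (x (pl j))) psi) (S x) s).
Proof.
elim: s I S => [|j s IHs] I S cardJ dec_S /=.
  by apply: prod_decomposition_card dec_S; rewrite cardJ big_nil muln1.
apply: IHs (prod_decomposition_step (@U _ _ _ _ _ P j) dec_S).
by rewrite cardJ big_cons expnD mulnA card_prod card_ffun card_bool card_sig.
Qed.

End ProductDecomposition.

Theorem mainTheorem3 (C : numClosedFieldType) (k : nat) (n : 'I_k -> nat) (m : nat)
    (X : 'I_k -> Type) (P : protocol C n m X) :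
  exists (a : forall p : 'I_k, {ffun 'I_(comm_complexity P) -> bool} -> X p -> C)
         (A : forall p : 'I_k, {ffun 'I_(comm_complexity P) -> bool} -> X p ->
                qubits (n p) -> C)
         (f : {ffun 'I_(comm_complexity P) -> bool} -> chan m -> C),
    [/\ forall (p : 'I_k) (i : {ffun 'I_(comm_complexity P) -> bool}) (xp : X p),
          unit_vec (A p i xp),
        forall i : {ffun 'I_(comm_complexity P) -> bool}, unit_vec (f i)
      & forall (x : forall p : 'I_k, X p) (b : forall p : 'I_k, qubits (n p)) (c : chan m),
          final_state P x b c =
          \sum_(i : {ffun 'I_(comm_complexity P) -> bool})
             (\prod_(p < k) a p i (x p)) * (\prod_(p < k) A p i (x p) (b p)) * f i c].
Proof.
have [A [g E]] : prod_decomposition {ffun 'I_(comm_complexity P) -> bool} (final_state P).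
  apply: prod_decomposition_foldl (@prod_decomposition_init C k n m X).
  by rewrite card_ffun card_bool card_ord card_unit mul1n big_enum.
exists (fun p i xp => vnorm (A p i xp)),
       (fun p i xp => normalize [ffun => false] (A p i xp)),
       (fun i c => (c == g i)%:R).
split=> [p i xp|i|x b c]; [exact: unit_vec_normalize | exact: unit_vec_delta |].
rewrite E; apply: eq_bigr => i _; rewrite -big_split /=; congr (_ * _).
by apply: eq_bigr => p _; rewrite vnorm_normalize.
Qed.
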